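(* Local dominance improvement dynamics for multiple issues need not converge, even if all issues are binary and all agents use the $\ell_\infty$ distance with the same constant uncertainty parameters. One instance: - $p=2$ binary issues, $n=13$ agents, and $(r^1_j,r^2_j)=(1,2)$ for every agent $j$ in every round. - Three agents have ranking $(0,1)\succ(1,1)\succ(1,0)\succ(0,0)$. - Five agents have ranking $(0,0)\succ(0,1)\succ(1,1)\succ(1,0)$. - Four agents have ranking $(1,0)\succ(1,1)\succ(0,0)\succ(0,1)$. - One agent has ranking $(1,1)\succ(1,0)\succ(0,1)\succ(0,0)$. In this instance there is an infinite (cyclic) sequence of LDI steps starting from the truthful vote profile.
   Context: Issues $\mathcal P=\{1,\dots,p\}$ with finite candidate sets $D_i$; binary means $D_i=\{0,1\}$. There are $n$ agents with strict rankings $\succ_j$ over $\mathcal D=\prod_iD_i$, and vote profiles $a\in\mathcal D^n$. The truthful profile has each agent voting for their top alternative. Score tuples and outcomes: - For a score tuple $v=(v^i)_i$ with $v^i\in\mathbb N^{D_i}$, the plurality outcome $f(v)$ picks on each issue the top-scoring candidate, with ties broken lexicographically ($0$ before $1$). - $v+b$ adds one vote for $b^i$ on each issue $i$. - $s_{-j}(a)$ is the score tuple of $a$ without agent $j$. Uncertainty with the $\ell_\infty$ distance and parameters $r_j=(r_j^i)_i$: $$\tilde S_{-j}(a;r_j)=\prod_i\{v^i\in\mathbb N^{D_i}:\max_{c}|v^i(c)-s^i_{-j}(c;a)|\le r^i_j\}.$$ Local dominance: $\hat a_j$ $S$-beats $a_j$ if some $v\in S$ has $f(v+\hat a_j)\succ_j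 f(v+a_j)$. The vote $\hat a_j$ $S$-dominates $a_j$ if it $S$-beats $a_j$ and $a_j$ does not $S$-beat $\hat a_j$. An LDI step of $j$ on issue $i$ at $a$ (with $S=\tilde S_{-j}(a;r_j)$) is a change to a vote that satisfies all of the following: - it $S$-dominates $a_j$; - it differs from $a_j$ only on issue $i$; - it is not $S$-dominated by another vote differing from $a_j$ only on issue $i$. Dynamics: at each round a scheduler selects one agent and one issue on which the agent has an LDI step, and that agent makes it. Convergence means every such sequence is finite from every initial profile. *)

From mathcomp Require Import all_boot.
Set Implicit Arguments. Unset Strict Implicit. Unset Printing Implicit Defensive.

(* Alternatives in D = {0,1}^p; candidate 0 = false, 1 = true. *)
Definition alt (p : nat) := {ffun 'I_p -> bool}.

(* A strict ranking is given as a duplicate-free list of all alternatives,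
   best first; x is preferred to y iff x occurs earlier. *)
Definition ranking (p : nat) := seq (alt p).
Definition is_ranking p (r : ranking p) := uniq r /\ forall x : alt p, x \in r.
Definition prefers p (r : ranking p) (x y : alt p) : bool :=
  index x r < index y r.
Definition top p (r : ranking p) (dflt : alt p) : alt p := head dflt r.

Definition profile (p n : nat) := 'I_n -> alt p.

(* Score tuples: v i c = score of candidate c on issue i. *)
Definition score (p : nat) := 'I_p -> bool -> nat.

(* Plurality outcome, ties broken lexicographically (0 = false before 1). *)
Definition outcome p (v : score p) : alt p := [ffun i => v i false < v i true].

Definition addv p (v : score p) (b : alt p) : score p :=
  fun i c => v i c + (b i == c).

Definition s_minus p n (a : profile p n) (j : 'I_n) : score p :=
  fun i c => #|[pred k : 'I_n | (k != j) && (a k i == c)]|.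

Definition Sinf p n (a : profile p n) (j : 'I_n) (rj : 'I_p -> nat)
  (v : score p) : Prop :=
  forall i c, v i c <= s_minus a j i c + rj i /\ s_minus a j i c <= v i c + rj i.

Definition Sbeats p (r : ranking p) (S : score p -> Prop) (b b' : alt p) : Prop :=
  exists v, S v /\ prefers r (outcome (addv v b)) (outcome (addv v b')).
Definition Sdominates p (r : ranking p) (S : score p -> Prop) (b b' : alt p) : Prop :=
  Sbeats r S b b' /\ ~ Sbeats r S b' b.

Definition differs_only_on p (i : 'I_p) (b b' : alt p) : Prop :=
  forall k, k != i -> b k = b' k.

Definition ldi_step p n (rk : 'I_n -> ranking p) (r : 'I_n -> 'I_p -> nat)
  (a : profile p n) (j : 'I_n) (i : 'I_p) (a' : profile p n) : Prop :=
  let S := Sinf a j (r j) in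
  (forall k, k != j -> a' k = a k) /\
  Sdominates (rk j) S (a' j) (a j) /\
  differs_only_on i (a' j) (a j) /\
  (forall b, differs_only_on i b (a j) -> ~ Sdominates (rk j) S b (a' j)).

Definition truthful p n (rk : 'I_n -> ranking p) (dflt : alt p) : profile p n :=
  fun j => top (rk j) dflt.

Definition infinite_ldi p n (rk : 'I_n -> ranking p) (r : 'I_n -> 'I_p -> nat)
  (a0 : profile p n) : Prop :=
  exists A : nat -> profile p n, A 0 = a0 /\
    forall t, exists (j : 'I_n) (i : 'I_p), ldi_step rk r (A t) j i (A t.+1).

Definition a2 (x y : bool) : alt 2 := [ffun i : 'I_2 => if val i == 0 then x else y].

Definition rankA : ranking 2 := [:: a2 false true; a2 true true; a2 true false; a2 false false].
Definition rankB : ranking 2 := [:: a2 false false; a2 false true; a2 true true; a2 true false].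
Definition rankC : ranking 2 := [:: a2 true false; a2 true true; a2 false false; a2 false true].
Definition rankD : ranking 2 := [:: a2 true true; a2 true false; a2 false true; a2 false false].

Definition inst_rank (j : 'I_13) : ranking 2 :=
  if val j < 3 then rankA else if val j < 8 then rankB
  else if val j < 12 then rankC else rankD.

Definition inst_r (j : 'I_13) (i : 'I_2) : nat := if val i == 0 then 1 else 2.

From mathcomp Require Import all_boot zify zmodp.
From Stdlib Require Import FunctionalExtensionality.
Set Implicit Arguments. Unset Strict Implicit. Unset Printing Implicit Defensive.

(* Sixteen LDI steps form a cycle through the truthful profile: the three agents
   whose favourite is (0,1) switch one by one to (1,1), then the five whose
   favourite is (0,0) switch one by one to (0,1), then the first three switch
   back, and finally the five.  With two binary issues the score tuples within
   l_inf distance (1,2) of the current scores are finitely many, so each step is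
   certified by a finite search, carried out by evaluation on profiles encoded
   as functions from agent indices to pairs of booleans. *)

Lemma infinite_ldi_periodic p n (rk : 'I_n -> ranking p) r
    (C : nat -> profile p n) m :
  0 < m -> (forall t, t < m -> exists j i, ldi_step rk r (C t) j i (C (t.+1 %% m))) ->
  infinite_ldi rk r (C 0).
Proof.
move=> m_gt0 stepC; exists (fun t => C (t %% m)); split; first by rewrite mod0n.
move=> t; rewrite -addn1 -modnDml addn1; exact/stepC/ltn_pmod.
Qed.

Definition window (s rad : nat) : seq nat := iota (s - rad) (s + rad - (s - rad)).+1.

Lemma mem_window s rad x : (x \in window s rad) = (x <= s + rad) && (s <= x + rad).
Proof. rewrite mem_iota; apply/idP/idP; lia. Qed.

Lemma ord2P (i : 'I_2) : i = ord0 \/ i = ord_max.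
Proof. by case: i => -[|[|//]] lt_i2; [left | right]; apply: val_inj. Qed.

Definition alt_of_pair (q : bool * bool) : alt 2 := a2 q.1 q.2.
Definition pair_of_alt (x : alt 2) : bool * bool := (x ord0, x ord_max).

Lemma alt_of_pairK : cancel alt_of_pair pair_of_alt.
Proof. by case=> x y; rewrite /pair_of_alt !ffunE. Qed.

Lemma pair_of_altK : cancel pair_of_alt alt_of_pair.
Proof. by move=> x; apply/ffunP => i; rewrite ffunE; case: (ord2P i) => ->. Qed.

Definition pairs2 : seq (bool * bool) :=
  [:: (false, false); (false, true); (true, false); (true, true)].

Lemma mem_pairs2 q : q \in pairs2.
Proof. by case: q => -[] []. Qed.

Lemma is_ranking_map_pair L : perm_eq L pairs2 -> is_ranking (map alt_of_pair L).
Proof.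
move=> perm_L; split.
  by rewrite (map_inj_uniq (can_inj alt_of_pairK)) (perm_uniq perm_L).
by move=> x; rewrite -[x]pair_of_altK map_f // (perm_mem perm_L) mem_pairs2.
Qed.

Lemma prefers_map_pair L x y :
  prefers (map alt_of_pair L) (alt_of_pair x) (alt_of_pair y) = (index x L < index y L).
Proof. by rewrite /prefers !(index_map (can_inj alt_of_pairK)). Qed.

Definition issue (i : nat) (q : bool * bool) : bool := if i == 0 then q.1 else q.2.

Lemma alt_of_pairE q i : alt_of_pair q i = issue i q.
Proof. by rewrite ffunE. Qed.

(* Finite quantifiers and cardinals over ['I_n] and finite functions do not
   reduce under [vm_compute], hence this encoding of profiles on two issues. *)
Definition profile_of n (m : nat -> bool * bool) : profile 2 n :=
  fun k => alt_of_pair (m k).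

Definition votes n (m : nat -> bool * bool) (j i : nat) (c : bool) : nat :=
  count (fun k => (k != j) && (issue i (m k) == c)) (iota 0 n).

Lemma s_minus_profile_of n m (j : 'I_n) (i : 'I_2) c :
  s_minus (profile_of m) j i c = votes n m j i c.
Proof.
rewrite /s_minus /votes cardE /enum_mem size_filter -val_enum_ord count_map enumT.
by apply: eq_count => k; rewrite !inE alt_of_pairE.
Qed.

Definition score2 (x0f x0t x1f x1t : nat) : score 2 := fun i c =>
  if val i == 0 then (if c then x0t else x0f) else (if c then x1t else x1f).

Definition outcome2 (v : score 2) (b : bool * bool) : bool * bool :=
  (v ord0 false + ~~ b.1 < v ord0 true + b.1,
   v ord_max false + ~~ b.2 < v ord_max true + b.2).

Lemma outcome_addv_pair v b :
  outcome (addv v (alt_of_pair b)) = alt_of_pair (outcome2 v b).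
Proof.
apply/ffunP => i; rewrite ffunE /addv alt_of_pairE.
by case: (ord2P i) => -> /=; rewrite !alt_of_pairE /=; case: b => -[] [].
Qed.

Section TwoIssues.

Variables (n : nat) (L : seq (bool * bool)) (rj : 'I_2 -> nat) (m : nat -> bool * bool).

Definition beats2b (j : nat) (b b' : bool * bool) : bool :=
  let w (i : 'I_2) c := window (votes n m j i c) (rj i) in
  has (fun x0f => has (fun x0t => has (fun x1f => has (fun x1t =>
    let v := score2 x0f x0t x1f x1t in index (outcome2 v b) L < index (outcome2 v b') L)
  (w ord_max true)) (w ord_max false)) (w ord0 true)) (w ord0 false).

Lemma beats2P (j : 'I_n) b b' :
  Sbeats (map alt_of_pair L) (Sinf (profile_of m) j rj) (alt_of_pair b) (alt_of_pair b')
  <-> beats2b j b b'.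
Proof.
have window_score (v : score 2) (i : 'I_2) c :
    (v i c \in window (votes n m j i c) (rj i)) =
    (v i c <= s_minus (profile_of m) j i c + rj i) &&
    (s_minus (profile_of m) j i c <= v i c + rj i).
  by rewrite mem_window s_minus_profile_of.
rewrite /Sbeats; split=> [[v [Sv]] | ].
  rewrite !outcome_addv_pair prefers_map_pair => v_beats.
  have w_v i c : v i c \in window (votes n m j i c) (rj i).
    by rewrite window_score; apply/andP; exact: Sv.
  apply/hasP; exists (v ord0 false); first exact: w_v.
  apply/hasP; exists (v ord0 true); first exact: w_v.
  apply/hasP; exists (v ord_max false); first exact: w_v.
  by apply/hasP; exists (v ord_max true); first exact: w_v.
case/hasP=> x0f w0f /hasP[x0t w0t] /hasP[x1f w1f] /hasP[x1t w1t] v_beats.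
exists (score2 x0f x0t x1f x1t); rewrite !outcome_addv_pair prefers_map_pair.
split=> // i c; apply/andP; rewrite -window_score.
by case: (ord2P i) => ->; case: c.
Qed.

Definition dominates2b (j : nat) (b b' : bool * bool) : bool :=
  beats2b j b b' && ~~ beats2b j b' b.

Lemma dominates2P (j : 'I_n) b b' :
  reflect (Sdominates (map alt_of_pair L) (Sinf (profile_of m) j rj)
                      (alt_of_pair b) (alt_of_pair b'))
          (dominates2b j b b').
Proof.
apply: (iffP andP) => [[/beats2P beats_bb' /negP nbeats] | [/beats2P-> nbeats]].
  by split=> // /beats2P.
by split=> //; apply/negP => /beats2P.
Qed.

End TwoIssues.

Definition same_except (i : nat) (q q' : bool * bool) : bool :=
  issue (1 - i) q == issue (1 - i) q'.

Lemma differs_only_on_pairP (i : 'I_2) q q' :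
  reflect (differs_only_on i (alt_of_pair q) (alt_of_pair q')) (same_except i q q').
Proof.
rewrite /same_except /differs_only_on; apply: (iffP eqP) => [same k | same].
  rewrite !alt_of_pairE; case: (ord2P i) same => -> same;
  by case: (ord2P k) => ->; rewrite ?eqxx.
by have := same (inZp (1 - i)); rewrite !alt_of_pairE; case: (ord2P i) => ->; apply.
Qed.

Definition ldi_step2b n L rj (m : nat -> bool * bool) (j i : nat) m' : bool :=
  [&& all (fun k => (k == j) || (m' k == m k)) (iota 0 n),
      same_except i (m' j) (m j), dominates2b n L rj m j (m' j) (m j) &
      all (fun b => same_except i b (m j) ==> ~~ dominates2b n L rj m j b (m' j)) pairs2].

Lemma ldi_step2P n (rk : 'I_n -> ranking 2) r m m' (j : 'I_n) (i : 'I_2) L :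
  rk j = map alt_of_pair L -> ldi_step2b n L (r j) m j i m' ->
  ldi_step rk r (profile_of m) j i (profile_of m').
Proof.
move=> rkE /and4P[/allP others /differs_only_on_pairP only_i
                  /dominates2P dom /allP undominated]; rewrite /ldi_step rkE.
split=> [k ne_kj | ].
  have /others : val k \in iota 0 n by rewrite mem_iota ltn_ord.
  by rewrite val_eqE (negbTE ne_kj) /profile_of => /eqP ->.
split=> //; split=> // b.
rewrite -[b]pair_of_altK => /differs_only_on_pairP only_i_b /dominates2P; apply/negP.
by have /implyP/(_ only_i_b) := undominated _ (mem_pairs2 (pair_of_alt b)).
Qed.

Definition inst_pairs (j : nat) : seq (bool * bool) :=
  if j < 3 then [:: (false, true); (true, true); (true, false); (false, false)]
  else if j < 8 then [:: (false, false); (false, true); (true, true); (true, false)]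
  else if j < 12 then [:: (true, false); (true, true); (false, false); (false, true)]
  else [:: (true, true); (true, false); (false, true); (false, false)].

Lemma inst_rankE j : inst_rank j = map alt_of_pair (inst_pairs j).
Proof. by rewrite /inst_rank /inst_pairs; do 3?case: ifP. Qed.

Lemma inst_rank_is_ranking j : is_ranking (inst_rank j).
Proof.
by rewrite inst_rankE; apply: is_ranking_map_pair; rewrite /inst_pairs; do 3?case: ifP.
Qed.

(* Among agents 0-2 the first [s.1] vote (1,1) instead of (0,1); among agents
   3-7 the first [s.2] vote (0,1) instead of (0,0). *)
Definition inst_votes (s : nat * nat) (k : nat) : bool * bool :=
  if k < 3 then (k < s.1, true) else if k < 8 then (false, k - 3 < s.2)
  else if k < 12 then (true, false) else (true, true).

Definition cycle_states : seq (nat * nat) :=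
  [:: (0, 0); (1, 0); (2, 0); (3, 0); (3, 1); (3, 2); (3, 3); (3, 4);
      (3, 5); (2, 5); (1, 5); (0, 5); (0, 4); (0, 3); (0, 2); (0, 1)].

Definition cycle_votes (t : nat) := inst_votes (nth (0, 0) cycle_states t).

(* [inZp] rather than [inord]: the index of [inZp k] evaluates to [k %% 13]. *)
Definition cycle_mover (s s' : nat * nat) : 'I_13 * 'I_2 :=
  if s.1 == s'.1 then (inZp (3 + minn s.2 s'.2), ord_max) else (inZp (minn s.1 s'.1), ord0).

Lemma cycle_ldi_steps :
  all (fun t => let: (j, i) := cycle_mover (nth (0, 0) cycle_states t)
                                           (nth (0, 0) cycle_states (t.+1 %% 16)) in
                ldi_step2b 13 (inst_pairs j) (inst_r j) (cycle_votes t) j i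
                           (cycle_votes (t.+1 %% 16)))
      (iota 0 16).
Proof. by vm_compute. Qed.

Lemma truthful_cycle_votes :
  truthful inst_rank (a2 false false) = profile_of (cycle_votes 0).
Proof.
apply: functional_extensionality => k.
rewrite /truthful /top inst_rankE /profile_of /cycle_votes /inst_votes /inst_pairs /=.
by rewrite ltn0; do 3?case: ifP.
Qed.

Theorem proposition2 :
  (forall j, is_ranking (inst_rank j)) /\
  infinite_ldi inst_rank inst_r (truthful inst_rank (a2 false false)).
Proof.
split; first exact: inst_rank_is_ranking.
rewrite truthful_cycle_votes.
apply: (@infinite_ldi_periodic _ _ _ _ (fun t => profile_of (cycle_votes t)) 16) => // t lt_t16.
have := allP cycle_ldi_steps t; rewrite mem_iota lt_t16 => /(_ isT).
case: cycle_mover => j i step; exists j, i.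
exact: ldi_step2P (inst_rankE j) step.
Qed.
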